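(* Let $n \ge 1$, let $\beta_w, \beta_n \in (0,1)$, and let $w_1, \dots, w_n \in \mathbb{R}_{\ge 0}$ with $W := \sum_{i=1}^n w_i \neq 0$. For a vector $t = (t_1,\dots,t_n) \in \mathbb{Z}_{\ge 0}^n$ with $T := \sum_{i=1}^n t_i$, the following are equivalent: (1) for every $S \subseteq [n]$ with $w(S) > \beta_w W$ we have $t(S) > \beta_n T$; (2) for every $S \subseteq [n]$ with $w(S) < (1-\beta_w) W$ we have $t(S) < (1-\beta_n) T$. Consequently, the Weight Qualification problem with parameters $(\beta_w, \beta_n, w_1,\dots,w_n)$ and the Weight Restriction problem with parameters $(1-\beta_w, 1-\beta_n, w_1,\dots,w_n)$ are identical (same feasible sets and same objective).
   Context: $[n] := \{1,\dots,n\}$; for $S \subseteq [n]$, $w(S) := \sum_{i \in S} w_i$ and $t(S) := \sum_{i\in S} t_i$. Weight Restriction with parameters $(\alpha_w,\alpha_n, w_1,\dots,w_n)$: find $t \in \mathbb{Z}_{\ge 0}^n$ minimizing $T$ subject to: for all $S\subseteq[n]$ with $w(S) < \alpha_w W$, $t(S) < \alpha_n T$. Weight Qualification with parameters $(\beta_w,\beta_n,w_1,\dots,w_n)$: find $t \in \mathbb{Z}_{\ge 0}^n$ minimizing $T$ subject to: for all $S \subseteq [n]$ with $w(S) > \beta_w W$, $t(S) > \beta_n T$. *)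

From HB Require Import structures.
From mathcomp Require Import all_boot all_order all_algebra.
From mathcomp Require Import reals.
Set Implicit Arguments. Unset Strict Implicit. Unset Printing Implicit Defensive.
Import Order.TTheory GRing.Theory Num.Theory.
Local Open Scope ring_scope.

Section Defs.
Variable R : realType.
Variable n : nat.

Definition wsum (w : 'I_n -> R) (S : {set 'I_n}) : R := \sum_(i in S) w i.
Definition Wtot (w : 'I_n -> R) : R := \sum_(i < n) w i.
Definition tsum (t : 'I_n -> nat) (S : {set 'I_n}) : R := (\sum_(i in S) t i)%:R.
(* T = sum_i t_i, viewed in R  (this is the objective of both problems) *)
Definition Ttot (t : 'I_n -> nat) : R := (\sum_(i < n) t i)%:R.

Definition WR_feasible (aw an : R) (w : 'I_n -> R) (t : 'I_n -> nat) : Prop :=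
  forall S : {set 'I_n}, wsum w S < aw * Wtot w -> tsum t S < an * Ttot t.

Definition WQ_feasible (bw bn : R) (w : 'I_n -> R) (t : 'I_n -> nat) : Prop :=
  forall S : {set 'I_n}, wsum w S > bw * Wtot w -> tsum t S > bn * Ttot t.

End Defs.
Arguments tsum R {n} t S.
Arguments Ttot R {n} t.

From HB Require Import structures.
From mathcomp Require Import all_boot all_order all_algebra.
From mathcomp Require Import reals.
Import Order.TTheory GRing.Theory Num.Theory.
Local Open Scope ring_scope.

(* Complementation S |-> [n] \ S is an involution on subsets, and it turns
   w(S) > b W into w([n] \ S) < (1 - b) W and likewise for t; so the
   qualification condition for (b_w, b_n) is exactly the restriction condition
   for (1 - b_w, 1 - b_n) read through complements.  None of the side
   conditions on n, b_w, b_n or w is needed. *)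

Section Complement.
Variables (R : realType) (n : nat).
Implicit Types (w : 'I_n -> R) (t : 'I_n -> nat) (S : {set 'I_n}) (a : R).

Lemma wsum_setC w S : wsum w (~: S) = Wtot w - wsum w S.
Proof.
rewrite /wsum /Wtot [in RHS](bigID (mem S)) /= addrC addrK.
by apply: eq_bigl => i; rewrite in_setC.
Qed.

Lemma tsum_setC t S : tsum R t (~: S) = Ttot R t - tsum R t S.
Proof.
rewrite /tsum /Ttot [in RHS](bigID (mem S)) /= natrD addrAC subrr add0r.
by congr (_%:R); apply: eq_bigl => i; rewrite in_setC.
Qed.

Lemma wsum_setC_lt a w S :
  (wsum w (~: S) < (1 - a) * Wtot w) = (a * Wtot w < wsum w S).
Proof. by rewrite wsum_setC mulrBl mul1r ltrD2l ltrN2. Qed.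

Lemma tsum_setC_lt a t S :
  (tsum R t (~: S) < (1 - a) * Ttot R t) = (a * Ttot R t < tsum R t S).
Proof. by rewrite tsum_setC mulrBl mul1r ltrD2l ltrN2. Qed.

Lemma WQ_feasible_WR_feasible bw bn w t :
  WQ_feasible bw bn w t <-> WR_feasible (1 - bw) (1 - bn) w t.
Proof.
split=> feas S.
- by rewrite -[S]setCK wsum_setC_lt tsum_setC_lt; apply: feas.
- by rewrite -wsum_setC_lt -tsum_setC_lt; apply: feas.
Qed.

End Complement.

Theorem theorem2 (R : realType) (n : nat) (hn : (1 <= n)%N)
  (bw bn : R) (hbw : 0 < bw < 1) (hbn : 0 < bn < 1)
  (w : 'I_n -> R) (hw : forall i, 0 <= w i) (hW : Wtot w != 0) :
  (forall t : 'I_n -> nat,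
     (forall S : {set 'I_n}, wsum w S > bw * Wtot w -> tsum R t S > bn * Ttot R t)
     <->
     (forall S : {set 'I_n}, wsum w S < (1 - bw) * Wtot w ->
                             tsum R t S < (1 - bn) * Ttot R t))
  /\
  (forall t : 'I_n -> nat,
     WQ_feasible bw bn w t <-> WR_feasible (1 - bw) (1 - bn) w t).
Proof. by split=> t; apply: WQ_feasible_WR_feasible. Qed.
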